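(* Let $(\sigma_n)_{n\ge1}$ be complex numbers with $\liminf_{n\to\infty}(\operatorname{Re}\sigma_{n+1}-\operatorname{Re}\sigma_n)=\gamma>0$. Then for every $\varepsilon\in(0,1)$ and every $T>\frac{2\pi}{\gamma\sqrt{1-\varepsilon}}$ there exists $n_0=n_0(\varepsilon)\in\mathbb{N}$ (independent of $T$) such that for every $n\ge n_0$ $$\sum_{m\ge n_0,\ m\ne n}|K(\sigma_n-\overline{\sigma_m})|+\sum_{m\ge n_0}|K(\sigma_n+\sigma_m)|\le\frac{4\pi}{T\gamma^2(1-\varepsilon)}\Big(1+\sum_{m=n_0}^\infty\frac{1}{4m^2-1}\Big).$$
   Context: For $T>0$ and $w\in\mathbb{C}$ with $T^2w^2\neq\pi^2$, $K(w):=\dfrac{T\pi}{\pi^2-T^2w^2}$. *)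

From Stdlib Require Import Reals Lra.
Open Scope R_scope.

Record Cplx := mkC { Re : R; Im : R }.

Definition Cadd (z w : Cplx) : Cplx := mkC (Re z + Re w) (Im z + Im w).
Definition Csub (z w : Cplx) : Cplx := mkC (Re z - Re w) (Im z - Im w).
Definition Cmul (z w : Cplx) : Cplx :=
  mkC (Re z * Re w - Im z * Im w) (Re z * Im w + Im z * Re w).
Definition Cconj (z : Cplx) : Cplx := mkC (Re z) (- Im z).
Definition RtoC (x : R) : Cplx := mkC x 0.
Definition Cinv (z : Cplx) : Cplx :=
  mkC (Re z / (Re z ^ 2 + Im z ^ 2)) (- Im z / (Re z ^ 2 + Im z ^ 2)).
Definition Cdiv (z w : Cplx) : Cplx := Cmul z (Cinv w).
Definition Cmod (z : Cplx) : R := sqrt (Re z ^ 2 + Im z ^ 2).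

Definition K (T : R) (w : Cplx) : Cplx :=
  Cdiv (RtoC (T * PI))
       (Csub (RtoC (PI ^ 2)) (Cmul (RtoC (T ^ 2)) (Cmul w w))).

Definition is_liminf (u : nat -> R) (g : R) : Prop :=
  (forall e, 0 < e -> exists N, forall n, (N <= n)%nat -> g - e <= u n) /\
  (forall e, 0 < e -> forall N, exists n, (N <= n)%nat /\ u n <= g + e).

(* Eventually the increments of Re sigma exceed c' := (gamma + c)/2, where c := gamma sqrt(1 - eps),
   so beyond some n0 the points are c-separated, |Re sigma_n - Re sigma_m| >= c |n - m|, and
   Re sigma_m >= c m.  Once T c > 2 pi, a real part of size c x >= c gives
   |K(w)| <= 4 pi / (T c^2 (4 x^2 - 1)).  Summed over m <> n, the terms 1/(4 (m - n)^2 - 1)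
   telescope to at most 1, and the terms 1/(4 m^2 - 1), m >= n0, add up to the tail sum s. *)
From Stdlib Require Import Reals Lra Lia Psatz ZArith.
Open Scope R_scope.

Lemma exists_nat_gt (x : R) : exists n : nat, x < INR n.
Proof.
  destruct (archimed (Rabs x)) as [Hup _].
  assert (Hz : (0 <= up (Rabs x))%Z) by (apply le_IZR; pose proof (Rabs_pos x); lra).
  exists (Z.to_nat (up (Rabs x))).
  rewrite INR_IZR_INZ, Z2Nat.id by exact Hz.
  pose proof (Rle_abs x); lra.
Qed.

Lemma INR_ge1 (j : nat) : (1 <= j)%nat -> 1 <= INR j.
Proof. intro Hj; exact (le_INR 1 j Hj). Qed.

Lemma Rabs_INR_sub_ge1 (m n : nat) : m <> n -> 1 <= Rabs (INR m - INR n).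
Proof.
  intro Hmn; destruct (Nat.lt_gt_cases m n) as [[Hlt | Hgt] _]; [exact Hmn | |].
  - rewrite Rabs_minus_sym, <- minus_INR, Rabs_pos_eq by (try apply pos_INR; lia).
    apply INR_ge1; lia.
  - rewrite <- minus_INR, Rabs_pos_eq by (try apply pos_INR; lia).
    apply INR_ge1; lia.
Qed.

Lemma Cmod_div_RtoC (a : R) (z : Cplx) :
  0 < Cmod z -> Cmod (Cdiv (RtoC a) z) = Rabs a / Cmod z.
Proof.
  intro Hz; unfold Cmod in *; unfold Cdiv, Cmul, Cinv, RtoC; cbn [Re Im].
  assert (Hq : 0 < Re z ^ 2 + Im z ^ 2).
  { destruct (Rle_lt_dec (Re z ^ 2 + Im z ^ 2) 0) as [Hle | Hlt]; [|exact Hlt].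
    rewrite (sqrt_neg_0 _ Hle) in Hz; lra. }
  replace (_ ^ 2 + _ ^ 2) with (a ^ 2 / (Re z ^ 2 + Im z ^ 2)) by (field; lra).
  rewrite sqrt_div_alt, <- pow2_abs, sqrt_pow2 by (try apply Rabs_pos; exact Hq).
  reflexivity.
Qed.

Lemma Cmod_real_sub_sqr_ge (p t : R) (w : Cplx) : 0 <= p -> 0 <= t ->
  t * Re w ^ 2 - p <= Cmod (Csub (RtoC p) (Cmul (RtoC t) (Cmul w w))).
Proof.
  intros Hp Ht; unfold Cmod, Csub, Cmul, RtoC; cbn [Re Im].
  set (a := Re w); set (b := Im w).
  destruct (Rle_lt_dec (t * a ^ 2 - p) 0) as [Hneg | Hpos].
  - pose proof (sqrt_pos ((p - (t * (a * a - b * b) - 0 * (a * b + b * a))) ^ 2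
                 + (0 - (t * (a * b + b * a) + 0 * (a * a - b * b))) ^ 2)); lra.
  - rewrite <- (sqrt_pow2 (t * a ^ 2 - p)) by lra.
    apply sqrt_le_1_alt.
    (* with v := t b^2, the difference of the two sides is v^2 + 2 v (t a^2 + p) *)
    assert (0 <= t * b ^ 2) by (apply Rmult_le_pos; [lra | apply pow2_ge_0]).
    assert (0 <= t * a ^ 2) by (apply Rmult_le_pos; [lra | apply pow2_ge_0]).
    nra.
Qed.

Lemma Cmod_K_le (T c x : R) (w : Cplx) :
  0 < T -> 0 < c -> 2 * PI < T * c -> 1 <= x -> c * x <= Rabs (Re w) ->
  Cmod (K T w) <= 4 * PI / (T * c ^ 2) * / (4 * x ^ 2 - 1).
Proof.
  intros HT Hc HTc Hx Hw; pose proof PI_RGT_0 as Hpi.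
  set (D := Csub (RtoC (PI ^ 2)) (Cmul (RtoC (T ^ 2)) (Cmul w w))).
  set (L := T ^ 2 * c ^ 2 * (4 * x ^ 2 - 1) / 4).
  assert (HL : 0 < L).
  { unfold L; apply Rmult_lt_0_compat; [|lra].
    apply Rmult_lt_0_compat; [apply Rmult_lt_0_compat; apply pow_lt; lra | nra]. }
  assert (HLD : L <= Cmod D).
  { eapply Rle_trans; [|apply Cmod_real_sub_sqr_ge; apply pow2_ge_0].
    assert (c ^ 2 * x ^ 2 <= Re w ^ 2).
    { rewrite <- (pow2_abs (Re w)), <- Rpow_mult_distr; apply pow_incr; split; [apply Rmult_le_pos; lra | exact Hw]. }
    (* pi^2 < T^2 c^2 / 4 absorbs the -1 in 4 x^2 - 1 *)
    assert (PI ^ 2 <= T ^ 2 * c ^ 2 / 4) by nra.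
    unfold L; nra. }
  unfold K; fold D.
  rewrite Cmod_div_RtoC, Rabs_pos_eq by nra.
  replace (4 * PI / (T * c ^ 2) * / (4 * x ^ 2 - 1)) with (T * PI / L)
    by (unfold L; field; repeat split; nra).
  apply Rmult_le_compat_l; [nra | apply Rinv_le_contravar; lra].
Qed.

Lemma sum_le_potential (f B : nat -> R) (m0 : nat) :
  (forall m, f m <= B m) -> (forall m, B m + f (S m) <= B (S m)) ->
  forall N, sum_f_R0 (fun k => f (k + m0)%nat) N <= B (N + m0)%nat.
Proof.
  intros Hbase Hstep; induction N as [|N IH]; simpl.
  - apply Hbase.
  - specialize (Hstep (N + m0)%nat); lra.
Qed.

Lemma inv_4sqr_sub1_telescope (d : R) :
  1 <= d -> / (4 * d ^ 2 - 1) = / (2 * (2 * d - 1)) - / (2 * (2 * d + 1)).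
Proof. intro Hd; field; repeat split; nra. Qed.

Definition offdiag_weight (n m : nat) : R :=
  if Nat.eq_dec m n then 0 else / (4 * (INR m - INR n) ^ 2 - 1).

(* the sum of offdiag_weight n m' over all integers m' <= m, by the telescoping identity *)
Definition offdiag_potential (n m : nat) : R :=
  if lt_dec m n then / (2 * (2 * (INR n - INR m) - 1))
  else 1 - / (2 * (2 * (INR m - INR n) + 1)).

Lemma offdiag_potential_le1 (n m : nat) : offdiag_potential n m <= 1.
Proof.
  unfold offdiag_potential; destruct (lt_dec m n).
  - assert (1 <= INR n - INR m) by (rewrite <- minus_INR by lia; apply INR_ge1; lia).
    assert (/ (2 * (2 * (INR n - INR m) - 1)) <= / 2) by (apply Rinv_le_contravar; nra).
    lra.
  - assert (0 <= INR m - INR n) by (rewrite <- minus_INR by lia; apply pos_INR).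
    assert (0 < / (2 * (2 * (INR m - INR n) + 1))) by (apply Rinv_0_lt_compat; nra).
    lra.
Qed.

Lemma offdiag_weight_le_potential (n m : nat) :
  offdiag_weight n m <= offdiag_potential n m.
Proof.
  unfold offdiag_weight, offdiag_potential.
  destruct (Nat.eq_dec m n) as [-> | Hmn].
  - destruct (lt_dec n n); [lia|].
    rewrite Rminus_diag; assert (/ (2 * (2 * 0 + 1)) = / 2) by (f_equal; ring); lra.
  - destruct (lt_dec m n).
    + assert (1 <= INR n - INR m) by (rewrite <- minus_INR by lia; apply INR_ge1; lia).
      replace ((INR m - INR n) ^ 2) with ((INR n - INR m) ^ 2) by ring.
      rewrite inv_4sqr_sub1_telescope by lra.
      assert (0 < / (2 * (2 * (INR n - INR m) + 1))) by (apply Rinv_0_lt_compat; nra).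
      lra.
    + assert (1 <= INR m - INR n) by (rewrite <- minus_INR by lia; apply INR_ge1; lia).
      assert (/ (4 * (INR m - INR n) ^ 2 - 1) <= / 3) by (apply Rinv_le_contravar; nra).
      assert (/ (2 * (2 * (INR m - INR n) + 1)) <= / 6) by (apply Rinv_le_contravar; nra).
      lra.
Qed.

Lemma offdiag_potential_step (n m : nat) :
  offdiag_potential n m + offdiag_weight n (S m) <= offdiag_potential n (S m).
Proof.
  unfold offdiag_weight, offdiag_potential; rewrite S_INR.
  destruct (Nat.eq_dec (S m) n) as [<- | Hmn].
  - destruct (lt_dec m (S m)), (lt_dec (S m) (S m)); try lia.
    rewrite S_INR; replace (INR m + 1 - INR m) with 1 by ring.
    replace (INR m + 1 - (INR m + 1)) with 0 by ring.
    assert (/ (2 * (2 * 1 - 1)) = / (2 * (2 * 0 + 1))) by (f_equal; ring); lra.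
  - destruct (lt_dec (S m) n), (lt_dec m n); try lia.
    + assert (1 <= INR n - (INR m + 1)).
      { rewrite <- S_INR, <- minus_INR by lia; apply INR_ge1; lia. }
      replace ((INR m + 1 - INR n) ^ 2) with ((INR n - (INR m + 1)) ^ 2) by ring.
      rewrite inv_4sqr_sub1_telescope by lra.
      replace (2 * (INR n - INR m) - 1) with (2 * (INR n - (INR m + 1)) + 1) by ring.
      lra.
    + assert (0 <= INR m - INR n) by (rewrite <- minus_INR by lia; apply pos_INR).
      rewrite inv_4sqr_sub1_telescope by lra.
      replace (2 * (INR m + 1 - INR n) - 1) with (2 * (INR m - INR n) + 1) by ring.
      lra.
Qed.

Lemma sum_offdiag_weight_le1 (n m0 N : nat) :
  sum_f_R0 (fun k => offdiag_weight n (k + m0)) N <= 1.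
Proof.
  eapply Rle_trans; [apply sum_le_potential | apply offdiag_potential_le1].
  - apply offdiag_weight_le_potential.
  - apply offdiag_potential_step.
Qed.

Lemma partial_sum_le_series (a : nat -> R) (s : R) :
  (forall k, 0 <= a k) -> infinite_sum a s -> forall N, sum_f_R0 a N <= s.
Proof.
  intros Ha Hs; apply growing_ineq; [|exact Hs].
  intro k; simpl; specialize (Ha (S k)); lra.
Qed.

Lemma is_liminf_eventually_ge (u : nat -> R) (g c : R) :
  is_liminf u g -> c < g -> exists N, forall n, (N <= n)%nat -> c <= u n.
Proof.
  intros [Hlow _] Hc; destruct (Hlow (g - c) ltac:(lra)) as [N HN].
  exists N; intros n Hn; specialize (HN n Hn); lra.
Qed.

Section IncrementsBounded.

Variables (u : nat -> R) (c : R) (N : nat).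
Hypothesis Hinc : forall n, (N <= n)%nat -> c <= u (S n) - u n.

Lemma increments_sum_ge (m j : nat) :
  (N <= m)%nat -> c * INR j <= u (m + j)%nat - u m.
Proof.
  intro Hm; induction j as [|j IH].
  - rewrite Nat.add_0_r; simpl; lra.
  - rewrite S_INR, Nat.add_succ_r.
    specialize (Hinc (m + j)%nat ltac:(lia)); lra.
Qed.

Lemma increments_separated (m n : nat) : 0 <= c -> (N <= m)%nat -> (N <= n)%nat ->
  c * Rabs (INR m - INR n) <= Rabs (u m - u n).
Proof.
  intros Hc Hm Hn.
  assert (Hle : forall a b, (N <= a <= b)%nat ->
            c * Rabs (INR a - INR b) <= Rabs (u a - u b)).
  { intros a b Hab.
    pose proof (increments_sum_ge a (b - a) ltac:(lia)) as Hgrow.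
    replace (a + (b - a))%nat with b in Hgrow by lia.
    rewrite minus_INR in Hgrow by lia.
    rewrite Rabs_minus_sym, (Rabs_minus_sym (u a)), !Rabs_pos_eq;
      [lra | | assert (INR a <= INR b) by (apply le_INR; lia); lra].
    assert (INR a <= INR b) by (apply le_INR; lia); nra. }
  destruct (Nat.le_ge_cases m n).
  - apply Hle; lia.
  - rewrite Rabs_minus_sym, (Rabs_minus_sym (u m)); apply Hle; lia.
Qed.

Lemma increments_eventually_linear (c0 : R) :
  c0 < c -> exists M, forall m, (M <= m)%nat -> c0 * INR m <= u m.
Proof.
  intro Hc0.
  destruct (exists_nat_gt ((c * INR N - u N) / (c - c0))) as [M HM].
  exists (N + M)%nat; intros m Hm.
  pose proof (increments_sum_ge N (m - N) (le_n N)) as Hgrow.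
  replace (N + (m - N))%nat with m in Hgrow by lia.
  rewrite minus_INR in Hgrow by lia.
  assert (INR M <= INR m) by (apply le_INR; lia).
  assert (c * INR N - u N < (c - c0) * INR m).
  { apply (Rmult_lt_compat_l (c - c0)) in HM; [|lra].
    replace ((c - c0) * ((c * INR N - u N) / (c - c0))) with (c * INR N - u N) in HM
      by (field; lra).
    nra. }
  lra.
Qed.

End IncrementsBounded.

Theorem lemma5p4 (sigma : nat -> Cplx) (gamma : R)
  (Hg : 0 < gamma)
  (Hlim : is_liminf (fun n => Re (sigma (S n)) - Re (sigma n)) gamma) :
  forall eps : R, 0 < eps < 1 ->
  exists n0 : nat, (1 <= n0)%nat /\
    forall T : R, 2 * PI / (gamma * sqrt (1 - eps)) < T ->
    forall n : nat, (n0 <= n)%nat ->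
    forall s : R,
      infinite_sum (fun k => / (4 * INR (k + n0)%nat ^ 2 - 1)) s ->
    forall N : nat,
      sum_f_R0 (fun k =>
        (if Nat.eq_dec (k + n0)%nat n then 0
         else Cmod (K T (Csub (sigma n) (Cconj (sigma (k + n0)%nat)))))
        + Cmod (K T (Cadd (sigma n) (sigma (k + n0)%nat)))) N
      <= 4 * PI / (T * gamma ^ 2 * (1 - eps)) * (1 + s).
Proof.
  intros eps Heps; pose proof PI_RGT_0 as Hpi.
  set (c := gamma * sqrt (1 - eps)).
  assert (Hr : 0 < sqrt (1 - eps) < 1).
  { split; [apply sqrt_lt_R0; lra|].
    apply Rlt_le_trans with (sqrt 1); [apply sqrt_lt_1_alt; lra | rewrite sqrt_1; lra]. }
  assert (Hc : 0 < c < gamma) by (unfold c; split; nra).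
  assert (Hc2 : c ^ 2 = gamma ^ 2 * (1 - eps)).
  { unfold c; rewrite Rpow_mult_distr, pow2_sqrt by lra; reflexivity. }
  set (u := fun m => Re (sigma m)).
  destruct (is_liminf_eventually_ge _ _ ((gamma + c) / 2) Hlim ltac:(lra)) as [N1 Hinc].
  assert (Hinc_c : forall m, (N1 <= m)%nat -> c <= u (S m) - u m)
    by (intros m Hm; specialize (Hinc m Hm); unfold u; simpl in *; lra).
  destruct (increments_eventually_linear u _ N1 Hinc c ltac:(lra)) as [M Hlin].
  exists (S (N1 + M)); split; [lia|].
  intros T HT n Hn s Hs N.
  assert (HTc : 2 * PI < T * c).
  { apply (Rmult_lt_compat_r c) in HT; [|lra].
    replace (2 * PI / c * c) with (2 * PI) in HT by (field; lra).
    lra. }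
  assert (HT0 : 0 < T) by nra.
  set (C := 4 * PI / (T * c ^ 2)).
  assert (HC : 0 < C) by (unfold C; apply Rdiv_lt_0_compat; nra).
  replace (4 * PI / (T * gamma ^ 2 * (1 - eps))) with C by (unfold C; rewrite Hc2, Rmult_assoc; reflexivity).
  set (n0 := S (N1 + M)) in *.
  set (w := fun k => / (4 * INR (k + n0)%nat ^ 2 - 1)).
  apply Rle_trans with
    (sum_f_R0 (fun k => offdiag_weight n (k + n0) * C + w k * C) N).
  - apply sum_Rle; intros k _; apply Rplus_le_compat.
    + unfold offdiag_weight; destruct (Nat.eq_dec (k + n0) n) as [|Hkn]; [lra|].
      rewrite <- pow2_abs, (Rmult_comm _ C).
      apply Cmod_K_le; try lra; [apply Rabs_INR_sub_ge1; exact Hkn|].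
      rewrite Rabs_minus_sym; cbn [Re Csub Cconj].
      apply (increments_separated u c N1 Hinc_c); lia || lra.
    + rewrite (Rmult_comm _ C); apply Cmod_K_le; try lra; [apply INR_ge1; lia|].
      cbn [Re Cadd]; pose proof (Hlin n ltac:(lia)); pose proof (Hlin (k + n0)%nat ltac:(lia)).
      assert (0 <= c * INR n) by (apply Rmult_le_pos; [lra | apply pos_INR]).
      assert (0 <= c * INR (k + n0)) by (apply Rmult_le_pos; [lra | apply pos_INR]).
      unfold u in *; rewrite Rabs_pos_eq; lra.
  - rewrite sum_plus, <- !scal_sum.
    pose proof (sum_offdiag_weight_le1 n n0 N).
    assert (sum_f_R0 w N <= s).
    { apply (partial_sum_le_series w s); [|exact Hs].
      intro k; unfold w; assert (1 <= INR (k + n0)) by (apply INR_ge1; lia).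
      apply Rlt_le, Rinv_0_lt_compat; nra. }
    nra.
Qed.
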